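(* Let $N\ge 1$ and $n\ge 1$ be integers, and let $x>1$ and $1\le y<2$ be real numbers. Let $\mathcal{S}_0,\dots,\mathcal{S}_{n-1}$ be nonempty sets of QPSK sequences of length $N$ such that, for every $0\le i\le n-1$: (a) $\mathrm{PEP}(\mathbf{s})\le x\,y^{2i}N$ for every $\mathbf{s}\in\mathcal{S}_i$; and (b) if $\mathbf{s}\in\mathcal{S}_i$ then $j^m\mathbf{s}\in\mathcal{S}_i$ for every $m\in\mathbb{Z}_4$. Let $\mathbf{a}$ be the $2^{2n}$-QAM sequence associated with $(\mathbf{s}_0,\dots,\mathbf{s}_{n-1})$, where $\mathbf{s}_i\in\mathcal{S}_i$ for all $i$. Then $$\mathrm{PEP}(\mathbf{a})\le 2^{2n-3}\left(\frac{1-(\frac{y}{2})^{n}}{1-\frac{y}{2}}\right)^2\cdot x\cdot N.$$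
   Context: Let $j=\sqrt{-1}$. Fix $T>0$ and reals $f_0,\Delta f$ with $T\Delta f$ a positive integer; set $f_k=f_0+k\Delta f$. For a complex sequence $\mathbf{a}=(a_0,\dots,a_{N-1})$ define $S_{\mathbf{a}}(t)=\sum_{k=0}^{N-1}a_ke^{2\pi j f_k t}$, $P_{\mathbf{a}}(t)=|S_{\mathbf{a}}(t)|^2$, and $\mathrm{PEP}(\mathbf{a})=\sup_{t\in[0,T]}P_{\mathbf{a}}(t)$. A QPSK sequence of length $N$ is a sequence $\mathbf{s}=(s_0,\dots,s_{N-1})$ with every $s_k\in\{1,j,-1,-j\}$; $j^m\mathbf{s}=(j^ms_0,\dots,j^ms_{N-1})$. The $2^{2n}$-QAM sequence associated with QPSK sequences $\mathbf{s}_0,\dots,\mathbf{s}_{n-1}$, $\mathbf{s}_i=(s_{i,0},\dots,s_{i,N-1})$, is $\mathbf{a}=(a_0,\dots,a_{N-1})$ with $a_k=\frac{\sqrt2}{2}e^{\pi j/4}\sum_{i=0}^{n-1}2^{n-1-i}s_{i,k}$. *)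

From Stdlib Require Import Reals.
From Coquelicot Require Import Coquelicot.
Open Scope R_scope.

Definition cj : C := (0, 1).

Definition cexpi (theta : R) : C := (cos theta, sin theta).

(* j^m for an integer m (here m ranges over Z_4 via nat m < 4, see statement) *)
Fixpoint cjpow (m : nat) : C :=
  match m with O => 1%C | S m' => Cmult cj (cjpow m') end.

Fixpoint Csum (f : nat -> C) (n : nat) : C :=
  match n with O => 0%C | S n' => Cplus (Csum f n') (f n') end.

(* complex sequences of length N are modelled as nat -> C, only indices < N matter *)

Definition freq (f0 df : R) (k : nat) : R := f0 + INR k * df.

Definition Ssig (N : nat) (f0 df : R) (a : nat -> C) (t : R) : C :=
  Csum (fun k => Cmult (a k) (cexpi (2 * PI * freq f0 df k * t))) N.

Definition Ppow (N : nat) (f0 df : R) (a : nat -> C) (t : R) : R :=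
  (Cmod (Ssig N f0 df a t)) ^ 2.

Definition PEP (N : nat) (T f0 df : R) (a : nat -> C) : Rbar :=
  Lub_Rbar (fun v => exists t, 0 <= t <= T /\ v = Ppow N f0 df a t).

Definition isQPSK (N : nat) (s : nat -> C) : Prop :=
  forall k, (k < N)%nat -> s k = 1%C \/ s k = cj \/ s k = Copp 1%C \/ s k = Copp cj.

Definition jscale (m : nat) (s : nat -> C) : nat -> C := fun k => Cmult (cjpow m) (s k).

Definition QAM (n : nat) (s : nat -> nat -> C) : nat -> C :=
  fun k => Cmult (Cmult (RtoC (sqrt 2 / 2)) (cexpi (PI / 4)))
                 (Csum (fun i => Cmult (RtoC (2 ^ (n - 1 - i))) (s i k)) n).

(* By linearity, S_a(t) = (sqrt 2 / 2) e^{j pi/4} sum_i 2^(n-1-i) S_(s_i)(t), and hypothesis (a)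
   gives |S_(s_i)(t)| <= sqrt (x N) y^i on [0, T]. The triangle inequality then bounds |S_a(t)| by
   (sqrt 2 / 2) 2^(n-1) sqrt (x N) sum_i (y/2)^i, a geometric sum, and squaring gives the claim. *)
From Stdlib Require Import Reals Lra Lia.
From Coquelicot Require Import Coquelicot.
Open Scope R_scope.

Fixpoint Rsum (f : nat -> R) (n : nat) : R :=
  match n with O => 0 | S n' => Rsum f n' + f n' end.

Lemma Rsum_le f g n : (forall k, (k < n)%nat -> f k <= g k) -> Rsum f n <= Rsum g n.
Proof.
  induction n as [|n IH]; simpl; intros H; [lra|].
  assert (f n <= g n) by auto. assert (Rsum f n <= Rsum g n) by auto. lra.
Qed.

Lemma Rsum_ext f g n : (forall k, (k < n)%nat -> f k = g k) -> Rsum f n = Rsum g n.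
Proof. induction n as [|n IH]; simpl; intros H; auto. rewrite IH, H; auto. Qed.

Lemma Rsum_scal c f n : Rsum (fun k => c * f k) n = c * Rsum f n.
Proof. induction n as [|n IH]; simpl; [ring|]. rewrite IH. ring. Qed.

Lemma Rsum_geom q n : Rsum (fun i => q ^ i) n * (1 - q) = 1 - q ^ n.
Proof. induction n as [|n IH]; simpl; [ring|]. rewrite Rmult_plus_distr_r, IH. ring. Qed.

Lemma Rsum_weighted_geom (y : R) (n : nat) : (1 <= n)%nat -> y <> 2 ->
  Rsum (fun i => 2 ^ (n - 1 - i) * y ^ i) n =
  2 ^ (n - 1) * ((1 - (y / 2) ^ n) / (1 - y / 2)).
Proof.
  intros Hn Hy.
  assert (Hterm : forall i, (i < n)%nat -> 2 ^ (n - 1 - i) * y ^ i = 2 ^ (n - 1) * (y / 2) ^ i).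
  { intros i Hi.
    replace (n - 1)%nat with ((n - 1 - i) + i)%nat at 2 by lia.
    rewrite pow_add, Rmult_assoc, <- (Rpow_mult_distr 2 (y / 2) i).
    replace (2 * (y / 2)) with y by field. ring. }
  transitivity (Rsum (fun i => 2 ^ (n - 1) * (y / 2) ^ i) n).
  - exact (Rsum_ext _ _ n Hterm).
  - rewrite Rsum_scal, <- Rsum_geom, Rmult_div_l by lra. reflexivity.
Qed.

Lemma Csum_ext f g n : (forall k, (k < n)%nat -> f k = g k) -> Csum f n = Csum g n.
Proof. induction n as [|n IH]; simpl; intros H; auto. rewrite IH, H; auto. Qed.

Lemma Csum_plus f g n : Csum (fun k => Cplus (f k) (g k)) n = Cplus (Csum f n) (Csum g n).
Proof. induction n as [|n IH]; simpl; [ring|]. rewrite IH. ring. Qed.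

Lemma Csum_scal c f n : Csum (fun k => Cmult c (f k)) n = Cmult c (Csum f n).
Proof. induction n as [|n IH]; simpl; [ring|]. rewrite IH. ring. Qed.

Lemma Csum_exchange (g : nat -> nat -> C) N n :
  Csum (fun k => Csum (fun i => g i k) n) N = Csum (fun i => Csum (fun k => g i k) N) n.
Proof.
  induction N as [|N IH]; simpl.
  - clear. induction n as [|n IH]; simpl; auto. rewrite <- IH. ring.
  - rewrite IH, <- Csum_plus. reflexivity.
Qed.

Lemma Cmod_Csum_le f n : Cmod (Csum f n) <= Rsum (fun k => Cmod (f k)) n.
Proof.
  induction n as [|n IH]; simpl; [rewrite Cmod_0; lra|].
  eapply Rle_trans; [apply Cmod_triangle|]. lra.
Qed.

Lemma Cmod_cexpi th : Cmod (cexpi th) = 1.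
Proof.
  unfold Cmod, cexpi; simpl. rewrite !Rmult_1_r. pose proof (sin2_cos2 th) as H. unfold Rsqr in H.
  rewrite <- sqrt_1. f_equal. lra.
Qed.

Lemma Ssig_Csum N f0 df (c : C) (w : nat -> R) (s : nat -> nat -> C) n t :
  Ssig N f0 df (fun k => Cmult c (Csum (fun i => Cmult (RtoC (w i)) (s i k)) n)) t =
  Cmult c (Csum (fun i => Cmult (RtoC (w i)) (Ssig N f0 df (s i) t)) n).
Proof.
  unfold Ssig. set (e k := cexpi (2 * PI * freq f0 df k * t)).
  transitivity (Csum (fun k => Cmult c
    (Csum (fun i => Cmult (RtoC (w i)) (Cmult (s i k) (e k))) n)) N).
  - apply Csum_ext; intros k _.
    rewrite <- Cmult_assoc, (Cmult_comm _ (e k)), <- Csum_scal. f_equal.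
    apply Csum_ext; intros i _. ring.
  - rewrite Csum_scal, Csum_exchange. f_equal.
    apply Csum_ext; intros i _. apply Csum_scal.
Qed.

Lemma Ppow_le_PEP N T f0 df a t : 0 <= t <= T ->
  Rbar_le (Finite (Ppow N f0 df a t)) (PEP N T f0 df a).
Proof. intros Ht. apply Lub_Rbar_correct. exists t; auto. Qed.

Lemma PEP_le N T f0 df a M : (forall t, 0 <= t <= T -> Ppow N f0 df a t <= M) ->
  Rbar_le (PEP N T f0 df a) (Finite M).
Proof. intros H. apply Lub_Rbar_correct. intros v [t [Ht ->]]. exact (H t Ht). Qed.

Lemma Cmod_Ssig_le_of_PEP N T f0 df a B t : 0 <= B ->
  Rbar_le (PEP N T f0 df a) (Finite (B ^ 2)) -> 0 <= t <= T ->
  Cmod (Ssig N f0 df a t) <= B.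
Proof.
  intros HB HPEP Ht.
  pose proof (Rbar_le_trans _ _ _ (Ppow_le_PEP N T f0 df a t Ht) HPEP) as H.
  simpl in H. unfold Ppow in H. pose proof (Cmod_ge_0 (Ssig N f0 df a t)). nra.
Qed.

Lemma Cmod_QAM_prefactor : Cmod (Cmult (RtoC (sqrt 2 / 2)) (cexpi (PI / 4))) = sqrt 2 / 2.
Proof.
  rewrite Cmod_mult, Cmod_cexpi, Cmod_R, Rmult_1_r. apply Rabs_right.
  pose proof (sqrt_pos 2). lra.
Qed.

Lemma Cmod_Ssig_QAM_le N f0 df n (s : nat -> nat -> C) (B : nat -> R) t :
  (forall i, (i < n)%nat -> Cmod (Ssig N f0 df (s i) t) <= B i) ->
  Cmod (Ssig N f0 df (QAM n s) t) <= sqrt 2 / 2 * Rsum (fun i => 2 ^ (n - 1 - i) * B i) n.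
Proof.
  intros HB. unfold QAM. rewrite Ssig_Csum, Cmod_mult, Cmod_QAM_prefactor.
  apply Rmult_le_compat_l; [pose proof (sqrt_pos 2); lra|].
  eapply Rle_trans; [apply Cmod_Csum_le|].
  apply Rsum_le; intros i Hi.
  rewrite Cmod_mult, Cmod_R, Rabs_right by (apply Rle_ge, pow_le; lra).
  apply Rmult_le_compat_l; [apply pow_le; lra | auto].
Qed.

Theorem lemma1
  (T f0 df : R) (HT : 0 < T)
  (HTdf : exists p : nat, (0 < p)%nat /\ T * df = INR p)
  (N n : nat) (HN : (1 <= N)%nat) (Hn : (1 <= n)%nat)
  (x y : R) (Hx : 1 < x) (Hy : 1 <= y < 2)
  (Sset : nat -> (nat -> C) -> Prop)
  (Hne : forall i, (i < n)%nat -> exists s, Sset i s)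
  (HQ : forall i s, (i < n)%nat -> Sset i s -> isQPSK N s)
  (Ha : forall i s, (i < n)%nat -> Sset i s ->
          Rbar_le (PEP N T f0 df s) (Finite (x * y ^ (2 * i) * INR N)))
  (Hb : forall i s m, (i < n)%nat -> Sset i s -> (m < 4)%nat -> Sset i (jscale m s))
  (s : nat -> nat -> C) (Hs : forall i, (i < n)%nat -> Sset i (s i)) :
  Rbar_le (PEP N T f0 df (QAM n s))
    (Finite (2 ^ (2 * n) / 8 * ((1 - (y / 2) ^ n) / (1 - y / 2)) ^ 2 * x * INR N)).
Proof.
  set (r := sqrt (x * INR N)).
  assert (HxN : 0 <= x * INR N) by (pose proof (pos_INR N); nra).
  assert (Hcomponent : forall i t, (i < n)%nat -> 0 <= t <= T ->
            Cmod (Ssig N f0 df (s i) t) <= y ^ i * r).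
  { intros i t Hi Ht. apply (Cmod_Ssig_le_of_PEP N T f0 df).
    - apply Rmult_le_pos; [apply pow_le; lra | apply sqrt_pos].
    - unfold r. rewrite Rpow_mult_distr, pow2_sqrt, <- pow_mult, Nat.mul_comm, <- Rmult_assoc
        by exact HxN.
      rewrite (Rmult_comm _ x). exact (Ha i (s i) Hi (Hs i Hi)).
    - exact Ht. }
  apply PEP_le; intros t Ht. unfold Ppow.
  pose proof (Cmod_Ssig_QAM_le N f0 df n s (fun i => y ^ i * r) t
                (fun i Hi => Hcomponent i t Hi Ht)) as Hbound.
  rewrite (Rsum_ext _ (fun i => r * (2 ^ (n - 1 - i) * y ^ i)) n), Rsum_scal,
    Rsum_weighted_geom in Hbound by (lra || (intros; ring) || exact Hn).
  pose proof (Cmod_ge_0 (Ssig N f0 df (QAM n s) t)).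
  apply Rle_trans with ((sqrt 2 / 2 * (r * (2 ^ (n - 1) * ((1 - (y / 2) ^ n) / (1 - y / 2))))) ^ 2);
    [apply pow_incr; lra|].
  right. unfold r. destruct n as [|m]; [lia|].
  replace (S m - 1)%nat with m by lia. replace (2 * S m)%nat with (2 + m + m)%nat by lia.
  unfold Rdiv at 1. rewrite !Rpow_mult_distr, !pow2_sqrt, !pow_add by lra. field. lra.
Qed.
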